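(* For the sequences $a_n=n+1$ $(n\ge0)$ and $a_n=(n+1)^2$ $(n\ge0)$, the polynomial $p_n(x)=\sum_{i=0}^n a_ix^i$ has exactly $n\bmod 2$ real roots, counted with multiplicity, for every $n\ge0$ (i.e., no real root if $n$ is even and exactly one if $n$ is odd). *)

From mathcomp Require Import all_boot all_order all_algebra.
From mathcomp Require Import reals.
Set Implicit Arguments. Unset Strict Implicit. Unset Printing Implicit Defensive.
Import Order.TTheory GRing.Theory Num.Theory.
Local Open Scope ring_scope.

Definition partial_poly (R : nzRingType) (a : nat -> R) (n : nat) : {poly R} :=
  \poly_(i < n.+1) a i.

Definition num_real_roots_mult (R : realType) (p : {poly R}) (k : nat) : Prop :=
  p != 0 /\
  exists s : seq R, [/\ uniq s, (forall x, root p x <-> x \in s)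
                      & (\sum_(x <- s) mup x p)%N = k].

From mathcomp Require Import all_boot all_order all_algebra.
From mathcomp Require Import reals.
From mathcomp Require Import ring lra.
From mathcomp Require Import polyrcf.
Set Implicit Arguments. Unset Strict Implicit. Unset Printing Implicit Defensive.
Import Order.TTheory GRing.Theory Num.Theory.
Local Open Scope ring_scope.

(* The argument rests on a general criterion (count_real_roots) for a
   sequence of positive coefficients a:
   - if every EVEN-degree partial polynomial of a is positive on x < 0, it is
     positive everywhere (positive coefficients handle x >= 0), so it has no
     real root;
   - p_n' is the partial polynomial of degree n-1 of the derived sequence
     (i+1) a_{i+1}; if those are positive everywhere as well, then for odd n
     p_n is strictly increasing: a root exists by the intermediate value
     theorem as soon as p_n(-1) < 0 < a_0 = p_n(0), it is unique by Rolle,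
     and it is simple since p_n' does not vanish there.
   The positivity on x < 0 for the four concrete sequences (i+1, (i+1)(i+2),
   (i+1)^2, (i+1)(i+2)^2) comes from closed forms of (1-x)^k p_m(x): for even
   m and x < 0 the powers x^(m+j) alternate in sign, so every term of the
   closed form is nonnegative and one is strictly positive. *)

Definition deriv_seq (R : nzRingType) (a : nat -> R) (i : nat) : R :=
  a i.+1 *+ i.+1.

Lemma partial_poly_horner (R : nzRingType) (a : nat -> R) (n : nat) (x : R) :
  (partial_poly a n).[x] = \sum_(i < n.+1) a i * x ^+ i.
Proof. by rewrite /partial_poly horner_poly. Qed.

Lemma partial_poly_deriv (R : nzRingType) (a : nat -> R) (n : nat) :
  (partial_poly a n.+1)^`() = partial_poly (deriv_seq a) n.
Proof.
apply/polyP => i; rewrite coef_deriv !coef_poly ltnS.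
by case: ifP => //; rewrite mul0rn.
Qed.

Definition even_pos_on_neg (R : numDomainType) (a : nat -> R) : Prop :=
  forall (m : nat) (x : R), ~~ odd m -> x < 0 -> 0 < (partial_poly a m).[x].

Section PositiveCoefficients.

Variable R : realFieldType.
Implicit Types a : nat -> R.

Lemma partial_poly_pos_nonneg a (n : nat) (x : R) :
  (forall i, 0 < a i) -> 0 <= x -> 0 < (partial_poly a n).[x].
Proof.
move=> a_gt0 x_ge0; rewrite partial_poly_horner big_ord_recl expr0 mulr1.
have : 0 <= \sum_(i < n) a (bump 0 i) * x ^+ bump 0 i.
  by apply: sumr_ge0 => i _; rewrite mulr_ge0 ?exprn_ge0 // ltW.
by have := a_gt0 0%N; lra.
Qed.

Lemma even_partial_poly_pos a (m : nat) (x : R) :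
  (forall i, 0 < a i) -> even_pos_on_neg a -> ~~ odd m ->
  0 < (partial_poly a m).[x].
Proof.
move=> a_gt0 a_neg m_even; have [x_lt0 | x_ge0] := ltP x 0.
  exact: a_neg.
exact: partial_poly_pos_nonneg.
Qed.

End PositiveCoefficients.

Section RootCounting.

Variable R : rcfType.
Implicit Types p : {poly R}.

Lemma deriv_pos_root_unique p (r x : R) :
  (forall y, 0 < p^`().[y]) -> root p r -> root p x -> x = r.
Proof.
move=> dp_gt0 /eqP pr /eqP px.
have no_crit (u v : R) : u < v -> p.[u] = p.[v] -> False.
  move=> uv puv; have [c _ dpc] := poly_rolle uv puv.
  by have := dp_gt0 c; rewrite dpc ltxx.
have [xr | rx | //] := ltgtP x r.
- by case: (no_crit _ _ xr); rewrite px pr.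
- by case: (no_crit _ _ rx); rewrite px pr.
Qed.

End RootCounting.

Lemma mup_simple_root (F : fieldType) (p : {poly F}) (r : F) :
  p != 0 -> root p r -> p^`().[r] != 0 -> mup r p = 1%N.
Proof.
move=> p_neq0 pr dpr; apply/eqP; rewrite eqn_leq.
rewrite (mup_geq _ _ p_neq0) expr1 dvdp_XsubCl pr andbT.
rewrite (mup_leq _ _ p_neq0); apply/negP => /dvdpP [q p_eq].
move: dpr; rewrite p_eq expr2 !derivM derivXsubC mul1r mulr1.
rewrite !(hornerD, hornerM, hornerN, hornerX, hornerC) subrr.
by rewrite !(mulr0, addr0) eqxx.
Qed.

Section Counting.

Variable R : realType.
Implicit Types (p : {poly R}) (a : nat -> R).

Lemma no_real_root p : (forall x, 0 < p.[x]) -> num_real_roots_mult p 0.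
Proof.
move=> p_gt0; split.
  by apply/eqP => p0; have := p_gt0 0; rewrite p0 horner0 ltxx.
exists [::]; split => // [x|]; last by rewrite big_nil.
by rewrite in_nil; split => // /eqP px; have := p_gt0 x; rewrite px ltxx.
Qed.

Lemma one_real_root p (r : R) :
  root p r -> (forall x, 0 < p^`().[x]) -> num_real_roots_mult p 1.
Proof.
move=> pr dp_gt0.
have p_neq0 : p != 0.
  by apply/eqP => p0; have := dp_gt0 0; rewrite p0 deriv0 horner0 ltxx.
split => //; exists [:: r]; split => //.
  move=> x; rewrite inE; split => [px|/eqP-> //].
  by apply/eqP; exact: deriv_pos_root_unique px.
by rewrite big_seq1 mup_simple_root // gt_eqF.
Qed.

Lemma count_real_roots a :
  (forall i, 0 < a i) -> even_pos_on_neg a -> even_pos_on_neg (deriv_seq a) ->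
  (forall n, odd n -> (partial_poly a n).[-1] < 0) ->
  forall n, num_real_roots_mult (partial_poly a n) (n %% 2).
Proof.
move=> a_gt0 a_neg da_neg alt_neg n; rewrite modn2.
case: (boolP (odd n)) => n_odd; last first.
  by apply: no_real_root => x; exact: even_partial_poly_pos.
have p0 : (partial_poly a n).[0] = a 0%N by rewrite horner_coef0 coef_poly.
have sign_change : (partial_poly a n).[-1] <= 0 <= (partial_poly a n).[0].
  by rewrite p0 !ltW ?alt_neg.
have [r _ pr] := poly_ivt (lerN10 R) sign_change.
case: n n_odd {p0 sign_change} pr => [//|m] /= m_even pr.
apply: one_real_root pr _ => x; rewrite partial_poly_deriv.
apply: even_partial_poly_pos => // i.
by rewrite /deriv_seq mulrn_wgt0.
Qed.

End Counting.

Section PowerSigns.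

Variable R : realFieldType.
Implicit Types x : R.

Lemma even_shift_pow_signs (m : nat) x : ~~ odd m -> x < 0 ->
  [/\ x ^+ m.+1 < 0, 0 < x ^+ m.+2, x ^+ m.+3 < 0 & 0 < x ^+ m.+4].
Proof.
move=> m_even x_lt0; have x_neq0 : x != 0 by rewrite lt_eqF.
by split; rewrite ?exprn_odd_lt0 ?exprn_even_gt0 //= ?negbK // x_neq0 orbT.
Qed.

(* For even m and x < 0: 1 + x > x^(m+1), trivially on [-1, 0) and because
   x^(m+1) <= x when x < -1. *)
Lemma odd_pow_below_succ (m : nat) x : ~~ odd m -> x < 0 ->
  0 < 1 + x - x ^+ m.+1.
Proof.
move=> m_even x_lt0; have [xm1 _ _ _] := even_shift_pow_signs m_even x_lt0.
have [x_ltN1 | x_geN1] := ltP x (-1); last by lra.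
have xm_ge1 : 1 <= x ^+ m.
  rewrite -[m](odd_double_half m) (negbTE m_even) add0n -muln2 mulnC exprM.
  by rewrite exprn_ege1 //; nra.
have : x ^+ m.+1 <= x by rewrite exprS; nra.
by lra.
Qed.

Lemma scaled_odd_pow_below_succ (m : nat) (k c : R) x :
  ~~ odd m -> x < 0 -> 0 < k -> k <= c -> 0 < k * (1 + x) - c * x ^+ m.+1.
Proof.
move=> m_even x_lt0 k_gt0 kc.
have [xm1 _ _ _] := even_shift_pow_signs m_even x_lt0.
have dom := odd_pow_below_succ m_even x_lt0.
have : 0 < k * (1 + x - x ^+ m.+1) by rewrite mulr_gt0.
have : 0 <= (c - k) * - x ^+ m.+1 by rewrite mulr_ge0 ?subr_ge0 ?oppr_ge0 ?(ltW xm1).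
by nra.
Qed.

Lemma minus1_pow_odd_succ (n : nat) : odd n ->
  [/\ (-1) ^+ n.+1 = 1 :> R, (-1) ^+ n.+2 = -1 :> R & (-1) ^+ n.+3 = 1 :> R].
Proof. by move=> n_odd; split; rewrite -signr_odd /= n_odd. Qed.

End PowerSigns.

Section ClosedForms.

Variable R : comNzRingType.
Implicit Types x : R.

Definition lin_seq (i : nat) : R := (i.+1)%:R.
Definition sq_seq (i : nat) : R := ((i.+1) ^ 2)%:R.

Lemma lin_closed_form (m : nat) x :
  (1 - x) ^+ 2 * (partial_poly lin_seq m).[x] =
  1 - (m.+2)%:R * x ^+ m.+1 + (m.+1)%:R * x ^+ m.+2.
Proof.
rewrite partial_poly_horner; elim: m => [|m IH].
  by rewrite big_ord_recr big_ord0 /lin_seq /=; ring.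
rewrite big_ord_recr /= mulrDr IH !exprS /lin_seq; set y := x ^+ m; ring.
Qed.

Lemma lin_deriv_closed_form (m : nat) x :
  (1 - x) ^+ 3 * (partial_poly (deriv_seq lin_seq) m).[x] =
  2 - ((m.+2) * (m.+3))%:R * x ^+ m.+1 + (2 * m.+1 * m.+3)%:R * x ^+ m.+2
    - (m.+1 * m.+2)%:R * x ^+ m.+3.
Proof.
rewrite partial_poly_horner /deriv_seq /lin_seq; elim: m => [|m IH].
  by rewrite big_ord_recr big_ord0 /= -mulr_natl; ring.
rewrite big_ord_recr /= mulrDr IH !exprS -mulr_natl; set y := x ^+ m; ring.
Qed.

Lemma sq_closed_form (m : nat) x :
  (1 - x) ^+ 3 * (partial_poly sq_seq m).[x] =
  1 + x - ((m.+2) ^ 2)%:R * x ^+ m.+1 + (2 * m ^ 2 + 6 * m + 3)%:R * x ^+ m.+2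
    - ((m.+1) ^ 2)%:R * x ^+ m.+3.
Proof.
rewrite partial_poly_horner /sq_seq; elim: m => [|m IH].
  by rewrite big_ord_recr big_ord0 /=; ring.
rewrite big_ord_recr /= mulrDr IH !exprS; set y := x ^+ m; ring.
Qed.

Lemma sq_deriv_closed_form (m : nat) x :
  (1 - x) ^+ 4 * (partial_poly (deriv_seq sq_seq) m).[x] =
  4 + 2 * x - (m.+2 * (m.+3) ^ 2)%:R * x ^+ m.+1
    + (3 * m ^ 3 + 21 * m ^ 2 + 44 * m + 24)%:R * x ^+ m.+2
    - (3 * m ^ 3 + 18 * m ^ 2 + 31 * m + 16)%:R * x ^+ m.+3
    + (m.+1 * (m.+2) ^ 2)%:R * x ^+ m.+4.
Proof.
rewrite partial_poly_horner /deriv_seq /sq_seq; elim: m => [|m IH].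
  by rewrite big_ord_recr big_ord0 /= -mulr_natl; ring.
rewrite big_ord_recr /= mulrDr IH !exprS -mulr_natl; set y := x ^+ m; ring.
Qed.

End ClosedForms.

Section Positivity.

Variable R : realFieldType.

Lemma lin_pos_on_neg : even_pos_on_neg (@lin_seq R).
Proof.
move=> m x m_even x_lt0; have [s1 s2 _ _] := even_shift_pow_signs m_even x_lt0.
have q_gt0 : 0 < (1 - x) ^+ 2 by rewrite exprn_gt0 //; lra.
rewrite -(pmulr_rgt0 _ q_gt0) lin_closed_form.
have : (m.+2)%:R * x ^+ m.+1 <= 0 by rewrite mulr_ge0_le0 // ltW.
have : 0 <= (m.+1)%:R * x ^+ m.+2 by rewrite mulr_ge0 // ltW.
by lra.
Qed.

Lemma lin_deriv_pos_on_neg : even_pos_on_neg (deriv_seq (@lin_seq R)).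
Proof.
move=> m x m_even x_lt0; have [s1 s2 s3 _] := even_shift_pow_signs m_even x_lt0.
have q_gt0 : 0 < (1 - x) ^+ 3 by rewrite exprn_gt0 //; lra.
rewrite -(pmulr_rgt0 _ q_gt0) lin_deriv_closed_form.
have : (m.+2 * m.+3)%:R * x ^+ m.+1 <= 0 by rewrite mulr_ge0_le0 // ltW.
have : 0 <= (2 * m.+1 * m.+3)%:R * x ^+ m.+2 by rewrite mulr_ge0 // ltW.
have : (m.+1 * m.+2)%:R * x ^+ m.+3 <= 0 by rewrite mulr_ge0_le0 // ltW.
by lra.
Qed.

Lemma sq_pos_on_neg : even_pos_on_neg (@sq_seq R).
Proof.
move=> m x m_even x_lt0; have [_ s2 s3 _] := even_shift_pow_signs m_even x_lt0.
have q_gt0 : 0 < (1 - x) ^+ 3 by rewrite exprn_gt0 //; lra.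
rewrite -(pmulr_rgt0 _ q_gt0) sq_closed_form.
have : 0 < 1 * (1 + x) - ((m.+2) ^ 2)%:R * x ^+ m.+1.
  by apply: scaled_odd_pow_below_succ; rewrite // ler1n expn_gt0.
have : 0 <= (2 * m ^ 2 + 6 * m + 3)%:R * x ^+ m.+2 by rewrite mulr_ge0 // ltW.
have : ((m.+1) ^ 2)%:R * x ^+ m.+3 <= 0 by rewrite mulr_ge0_le0 // ltW.
by lra.
Qed.

Lemma sq_deriv_pos_on_neg : even_pos_on_neg (deriv_seq (@sq_seq R)).
Proof.
move=> m x m_even x_lt0; have [_ s2 s3 s4] := even_shift_pow_signs m_even x_lt0.
have q_gt0 : 0 < (1 - x) ^+ 4 by rewrite exprn_gt0 //; lra.
rewrite -(pmulr_rgt0 _ q_gt0) sq_deriv_closed_form.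
have : 0 < 2 * (1 + x) - (m.+2 * (m.+3) ^ 2)%:R * x ^+ m.+1.
  apply: scaled_odd_pow_below_succ => //.
  by rewrite ler_nat (leq_trans _ (leq_pmulr _ _)) // expn_gt0.
have : 0 <= (3 * m ^ 3 + 21 * m ^ 2 + 44 * m + 24)%:R * x ^+ m.+2.
  by rewrite mulr_ge0 // ltW.
have : (3 * m ^ 3 + 18 * m ^ 2 + 31 * m + 16)%:R * x ^+ m.+3 <= 0.
  by rewrite mulr_ge0_le0 // ltW.
have : 0 <= (m.+1 * (m.+2) ^ 2)%:R * x ^+ m.+4 by rewrite mulr_ge0 // ltW.
by lra.
Qed.

Lemma lin_neg_at_minus1 (n : nat) : odd n -> (partial_poly (@lin_seq R) n).[-1] < 0.
Proof.
move=> n_odd; have q_gt0 : 0 < (1 - (-1 : R)) ^+ 2 by rewrite exprn_gt0 //; lra.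
rewrite -(pmulr_rlt0 _ q_gt0) lin_closed_form.
have [-> -> _] := minus1_pow_odd_succ R n_odd; rewrite mulr1.
have : 1 <= (n.+2)%:R :> R by rewrite ler1n.
have : 1 <= (n.+1)%:R :> R by rewrite ler1n.
by lra.
Qed.

Lemma sq_neg_at_minus1 (n : nat) : odd n -> (partial_poly (@sq_seq R) n).[-1] < 0.
Proof.
move=> n_odd; have q_gt0 : 0 < (1 - (-1 : R)) ^+ 3 by rewrite exprn_gt0 //; lra.
rewrite -(pmulr_rlt0 _ q_gt0) sq_closed_form.
have [-> -> ->] := minus1_pow_odd_succ R n_odd; rewrite !mulr1.
have : 1 <= ((n.+2) ^ 2)%:R :> R by rewrite ler1n expn_gt0.
have : 0 <= (2 * n ^ 2 + 6 * n + 3)%:R :> R by [].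
have : 0 <= ((n.+1) ^ 2)%:R :> R by [].
by lra.
Qed.

End Positivity.

Theorem mainTheorem5 (R : realType) :
  (forall n : nat,
     num_real_roots_mult (partial_poly (fun i : nat => (i.+1)%:R : R) n) (n %% 2)) /\
  (forall n : nat,
     num_real_roots_mult (partial_poly (fun i : nat => ((i.+1) ^ 2)%:R : R) n) (n %% 2)).
Proof.
split.
- apply: (@count_real_roots R (@lin_seq R)).
  + by move=> i; rewrite /lin_seq ltr0n.
  + exact: lin_pos_on_neg.
  + exact: lin_deriv_pos_on_neg.
  + exact: lin_neg_at_minus1.
- apply: (@count_real_roots R (@sq_seq R)).
  + by move=> i; rewrite /sq_seq ltr0n expn_gt0.
  + exact: sq_pos_on_neg.
  + exact: sq_deriv_pos_on_neg.
  + exact: sq_neg_at_minus1.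
Qed.
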